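(* Consider an electrical circuit, modeled as described in the context, in which the elastance $E_m$ of $q$-memristors and the reluctance $\mathcal{R}_w$ of $\varphi$-memristors vanish at equilibria. Suppose that at a given equilibrium the resistance and conductance matrices $R$, $G$ are positive definite and the elastance $E_c$ of capacitors and the reluctance $\mathcal{R}_l$ of inductors are non-singular. Then the geometric multiplicity of the null eigenvalue (of the linearization at that equilibrium) equals the number of memristors ($q$- and $\varphi$-memristors) plus the number of independent VL-loops plus the number of independent IC-cutsets.
   Context: Circuit setting. The circuit has an underlying digraph $\mathcal{G}$ with $n$ nodes, $m$ branches and $k$ connected components. A cutset is a set of branches whose removal increases the number of connected components and which is minimal with this property; a loop is a cycle of branches. Let $B$ be a reduced loop matrix (full-row-rank set of rows of the loop matrix, entries $1,-1,0$ according as a branch is in a loop with the same orientation, opposite orientation, or not at all) and $D$ a reduced cutset matrix (analogous with oriented cutsets), with columns in the same branch order. For a set of branches $K$, $B_K$, $D_K$ are the submatrices of columns of branches in $K$; the number of independent cutsets formed only by branches of $K$ is $\dim\ker B_K$, and the number of independent loops formed only by branches of $K$ is $\dim\ker D_K$. Each branch carries a voltage $v$ and current $i$ and belongs to one of eight classes. $q$-devices ($v=\eta(q,i,t)$, $C^1$): $q$-memristors $v_m=\eta_1(q_m,i_m,t)$ (with $\partial\eta_1/\partial q_m\not\equiv0$, $\partial\eta_1/\partial i_m\not\equiv0$), capacitors $v_c=\eta_2(q_c,t)$, current-controlled resistors $v_r=\eta_3(i_r,t)$, voltage sources $v_u=\eta_4(t)$. $\varphi$-devices ($i=\zeta(\varphi,v,t)$,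 $C^1$): $\varphi$-memristors $i_w=\zeta_1(\varphi_w,v_w,t)$ (with $\partial\zeta_1/\partial\varphi_w\not\equiv0$, $\partial\zeta_1/\partial v_w\not\equiv0$), inductors $i_l=\zeta_2(\varphi_l,t)$, voltage-controlled resistors $i_g=\zeta_3(v_g,t)$, current sources $i_j=\zeta_4(t)$. Maps may be vector-valued. With $B=(B_q\ B_\varphi)$, $D=(D_q\ D_\varphi)$ split by $q$- and $\varphi$-devices, and $q_{mc}=(q_m,q_c)$, $\varphi_{wl}=(\varphi_w,\varphi_l)$, the circuit is modeled by the semiexplicit differential-algebraic system $q_{mc}'=i_{mc}$, $\varphi_{wl}'=v_{wl}$, $0=v_q-f(q_{mc},i_q,t)$, $0=i_\varphi-g(\varphi_{wl},v_\varphi,t)$, $0=B_qv_q+B_\varphi v_\varphi$, $0=D_qi_q+D_\varphi i_\varphi$, where $f$ collects $\eta_1,\dots,\eta_4$ and $g$ collects $\zeta_1,\dots,\zeta_4$. An equilibrium point is a point at which all right-hand sides vanish. The linearization at an equilibrium is the matrix pencil $\lambda H-K$, where $K$ is the Jacobian of the right-hand sides with respect to $(q_{mc},\varphi_{wl},v_q,i_q,v_\varphi,i_\varphi)$ at the equilibrium and $H=\mathrm{block\text{-}diag}\{I,0\}$ (identity on the differential variables $q_{mc},\varphi_{wl}$); the geometric multiplicity of the null eigenvalue is $\dim\ker K$. Characteristic matrices: resistance $R=\partial\eta_3/\partial i_r$, conductance $G=\partial\zeta_3/\partial v_g$, elastances $E_m=\partial\eta_1/\partial q_m$, $E_c=\partial\eta_2/\partial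 q_c$, reluctances $\mathcal{R}_w=\partial\zeta_1/\partial\varphi_w$, $\mathcal{R}_l=\partial\zeta_2/\partial\varphi_l$. A square matrix $P$ is positive definite if $u^TPu>0$ for all $u\ne0$ (symmetry not assumed). A VL-loop is a loop consisting only of voltage sources and/or inductors; an IC-cutset is a cutset consisting only of current sources and/or capacitors. *)

From HB Require Import structures.
From mathcomp Require Import all_boot all_order all_algebra.
From mathcomp Require Import all_classical all_reals all_analysis.
Set Implicit Arguments. Unset Strict Implicit. Unset Printing Implicit Defensive.
Import Order.TTheory GRing.Theory Num.Theory.
Local Open Scope ring_scope.

Section Graph.
Variables (R : realType) (n m : nat) (src tgt : 'I_m -> 'I_n).

Definition adjb (X : {set 'I_m}) : rel 'I_n :=
  fun u v => [exists e in X, ((src e == u) && (tgt e == v))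
                          || ((src e == v) && (tgt e == u))].

Definition ncomp (X : {set 'I_m}) : nat := n_comp (adjb X) predT.

Definition is_cutset (C : {set 'I_m}) : bool :=
  (ncomp [set: 'I_m] < ncomp (~: C))%N &&
  [forall C' : {set 'I_m}, (C' \proper C) ==> ~~ (ncomp [set: 'I_m] < ncomp (~: C'))%N].

Definition cutset_vec (u : 'rV[R]_m) : Prop :=
  exists (C : {set 'I_m}) (S : {set 'I_n}),
    [/\ is_cutset C,
        (forall e, (e \in C) = ((src e \in S) != (tgt e \in S))) &
        u = \row_e (if e \in C then (if src e \in S then 1 else -1) else 0)].

(* a loop is a closed walk through distinct branches and distinct nodes;
   a step (e, true) traverses e from src to tgt, (e, false) from tgt to src *)
Definition step_start (s : 'I_m * bool) : 'I_n := if s.2 then src s.1 else tgt s.1.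
Definition step_end (s : 'I_m * bool) : 'I_n := if s.2 then tgt s.1 else src s.1.

Definition is_loop (p : seq ('I_m * bool)) : bool :=
  [&& (0 < size p)%N, uniq (map fst p), uniq (map step_start p)
    & cycle (fun s1 s2 => step_end s1 == step_start s2) p].

Definition loop_vec (u : 'rV[R]_m) : Prop :=
  exists p, is_loop p /\
    u = \row_e (\sum_(s <- p | s.1 == e) (if s.2 then 1 else -1)).

Definition reduced_loop_matrix r (B : 'M[R]_(r, m)) : Prop :=
  [/\ row_free B, (forall i, loop_vec (row i B)) &
      (forall u, loop_vec u -> (u <= B)%MS)].

Definition reduced_cutset_matrix r (D : 'M[R]_(r, m)) : Prop :=
  [/\ row_free D, (forall i, cutset_vec (row i D)) &
      (forall u, cutset_vec u -> (u <= D)%MS)].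
End Graph.

Definition subcols (R : Type) r m (K : {set 'I_m}) (M : 'M[R]_(r, m)) : 'M[R]_(r, #|K|) :=
  colsub (fun j : 'I_#|K| => enum_val j) M.

(* dim ker M, M acting on column vectors *)
Definition dimker (R : fieldType) r c (M : 'M[R]_(r, c)) : nat := \rank (kermx M^T).

(* standard Jacobian matrix (rows = components of f) *)
Definition jac (R : realType) a b (f : 'rV[R]_a -> 'rV[R]_b) (p : 'rV[R]_a) : 'M[R]_(b, a) :=
  (jacobian f p)^T.

Definition posdef (R : realType) k (P : 'M[R]_k) : Prop :=
  forall u : 'rV[R]_k, u != 0 -> 0 < (u *m P *m u^T) 0 0.

(* Branch ordering: q-devices first (q-memristors nm, capacitors nc,   *)
(* current-controlled resistors nr, voltage sources nu), then          *)
(* phi-devices (phi-memristors nw, inductors nl, voltage-controlled    *)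
(* resistors ng, current sources nj).                                  *)
Notation nbr4 a b c d := ((a + b) + (c + d))%N.

Definition brange M (a b : nat) : {set 'I_M} := [set e : 'I_M | (a <= e < b)%N].

Definition VLset nm nc nr nu nw nl ng nj : {set 'I_(nbr4 nm nc nr nu + nbr4 nw nl ng nj)} :=
  brange _ (nm + nc + nr) (nbr4 nm nc nr nu)
  :|: brange _ (nbr4 nm nc nr nu + nw) (nbr4 nm nc nr nu + nw + nl).
Definition ICset nm nc nr nu nw nl ng nj : {set 'I_(nbr4 nm nc nr nu + nbr4 nw nl ng nj)} :=
  brange _ nm (nm + nc)
  :|: brange _ (nbr4 nm nc nr nu + nw + nl + ng) (nbr4 nm nc nr nu + nbr4 nw nl ng nj).

(* The Jacobian K of the right-hand sides w.r.t.                       *)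
(*   (q_mc, phi_wl, v_q, i_q, v_phi, i_phi)   (columns, in this order)  *)
(* for the equations (rows, in this order)                             *)
(*   q_mc' = i_mc ; phi_wl' = v_wl ; 0 = v_q - f ; 0 = i_phi - g ;     *)
(*   0 = B_q v_q + B_phi v_phi ; 0 = D_q i_q + D_phi i_phi,            *)
(* written blockwise in terms of the partial Jacobians of the devices: *)
(*   Em = d eta1/d q_m, Zm = d eta1/d i_m, Ec = d eta2/d q_c,          *)
(*   Rr = d eta3/d i_r, Rw = d zeta1/d phi_w, Yw = d zeta1/d v_w,      *)
(*   Rl = d zeta2/d phi_l, Gg = d zeta3/d v_g.                         *)
Section Lin.
Variables (R : realType) (nm nc nr nu nw nl ng nj rb rd : nat).
Variables (Em Zm : 'M[R]_nm) (Ec : 'M[R]_nc) (Rr : 'M[R]_nr)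
          (Rw Yw : 'M[R]_nw) (Rl : 'M[R]_nl) (Gg : 'M[R]_ng).
Variables (B : 'M[R]_(rb, nbr4 nm nc nr nu + nbr4 nw nl ng nj))
          (D : 'M[R]_(rd, nbr4 nm nc nr nu + nbr4 nw nl ng nj)).

(* d f / d q_mc  and  d f / d i_q *)
Definition Fq : 'M[R]_(nbr4 nm nc nr nu, nm + nc) :=
  col_mx (block_mx Em 0 0 Ec) 0.
Definition Fi : 'M[R]_(nbr4 nm nc nr nu, nbr4 nm nc nr nu) :=
  block_mx (block_mx Zm 0 0 0) 0 0 (block_mx Rr 0 0 0).
(* d g / d phi_wl  and  d g / d v_phi *)
Definition Gp : 'M[R]_(nbr4 nw nl ng nj, nw + nl) :=
  col_mx (block_mx Rw 0 0 Rl) 0.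
Definition Gv : 'M[R]_(nbr4 nw nl ng nj, nbr4 nw nl ng nj) :=
  block_mx (block_mx Yw 0 0 0) 0 0 (block_mx Gg 0 0 0).

Definition linK :
  'M[R]_((nm + nc) + ((nw + nl) + (nbr4 nm nc nr nu + (nbr4 nw nl ng nj + (rb + rd)))),
         (nm + nc) + ((nw + nl) + (nbr4 nm nc nr nu + (nbr4 nm nc nr nu
                     + (nbr4 nw nl ng nj + nbr4 nw nl ng nj))))) :=
  col_mx
   (row_mx 0 (row_mx 0 (row_mx 0 (row_mx (row_mx 1%:M 0) (row_mx 0 0)))))
  (col_mx
   (row_mx 0 (row_mx 0 (row_mx 0 (row_mx 0 (row_mx (row_mx 1%:M 0) 0)))))
  (col_mx
   (row_mx (- Fq) (row_mx 0 (row_mx 1%:M (row_mx (- Fi) (row_mx 0 0)))))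
  (col_mx
   (row_mx 0 (row_mx (- Gp) (row_mx 0 (row_mx 0 (row_mx (- Gv) 1%:M)))))
  (col_mx
   (row_mx 0 (row_mx 0 (row_mx (lsubmx B) (row_mx 0 (row_mx (rsubmx B) 0)))))
   (row_mx 0 (row_mx 0 (row_mx 0 (row_mx (lsubmx D) (row_mx 0 (rsubmx D)))))))))).
End Lin.

(* Equilibrium of the semiexplicit DAE at time t0:  the point          *)
(*   (q_mc, phi_wl, v_q, i_q, v_phi, i_phi)                            *)
(* annihilates all right-hand sides.  Splitting conventions:           *)
(*   q_mc = (q_m, q_c), phi_wl = (phi_w, phi_l),                       *)
(*   v_q, i_q split as ((m, c), (r, u)), v_phi, i_phi as ((w, l), (g, j)). *)
Definition equilibrium (R : realType) (nm nc nr nu nw nl ng nj rb rd : nat)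
  (B : 'M[R]_(rb, nbr4 nm nc nr nu + nbr4 nw nl ng nj))
  (D : 'M[R]_(rd, nbr4 nm nc nr nu + nbr4 nw nl ng nj))
  (eta1 : 'rV[R]_nm -> 'rV[R]_nm -> R -> 'rV[R]_nm)
  (eta2 : 'rV[R]_nc -> R -> 'rV[R]_nc)
  (eta3 : 'rV[R]_nr -> R -> 'rV[R]_nr)
  (eta4 : R -> 'rV[R]_nu)
  (zeta1 : 'rV[R]_nw -> 'rV[R]_nw -> R -> 'rV[R]_nw)
  (zeta2 : 'rV[R]_nl -> R -> 'rV[R]_nl)
  (zeta3 : 'rV[R]_ng -> R -> 'rV[R]_ng)
  (zeta4 : R -> 'rV[R]_nj)
  (qmc : 'rV[R]_(nm + nc)) (pwl : 'rV[R]_(nw + nl))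
  (vq iq : 'rV[R]_(nbr4 nm nc nr nu)) (vp ip : 'rV[R]_(nbr4 nw nl ng nj)) (t0 : R) : Prop :=
  [/\ lsubmx iq = 0 /\
      lsubmx vp = 0,
      vq = row_mx (row_mx (eta1 (lsubmx qmc) (lsubmx (lsubmx iq)) t0)
                          (eta2 (rsubmx qmc) t0))
                  (row_mx (eta3 (lsubmx (rsubmx iq)) t0) (eta4 t0)),
      ip = row_mx (row_mx (zeta1 (lsubmx pwl) (lsubmx (lsubmx vp)) t0)
                          (zeta2 (rsubmx pwl) t0))
                  (row_mx (zeta3 (lsubmx (rsubmx vp)) t0) (zeta4 t0)),
      B *m (row_mx vq vp)^T = 0 &
      D *m (row_mx iq ip)^T = 0].

(* At an equilibrium where E_m and R_w vanish, a kernel vector of the linearization has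
   zero memristor voltages and currents, v_r = R i_r and i_g = G v_g, and its branch
   voltages and currents satisfy KVL and KCL.  By Tellegen's theorem (voltages satisfying
   KVL are orthogonal to currents satisfying KCL), i_r^T R i_r + v_g^T G v_g = 0, so
   i_r = 0 and v_g = 0 by positive definiteness.  What remains free is: the memristor
   charges q_m and fluxes phi_w; the currents of voltage sources and inductors, subject to
   KCL, i.e. a vector of ker D_VL; the voltages of current sources and capacitors, subject
   to KVL, i.e. a vector of ker B_IC.  The capacitor charges and inductor fluxes are then
   determined through the invertible E_c and R_l.
   Tellegen's theorem holds because voltages satisfying KVL derive from node potentials,
   and currents satisfying KCL on cutsets satisfy it on every cut: a cut which is not a
   cutset splits into smaller cuts. *)

From HB Require Import structures.
From mathcomp Require Import all_boot all_order all_algebra.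
From mathcomp Require Import all_classical all_reals all_analysis.
From mathcomp Require Import fintype finset fingraph ring lra zify.
Set Implicit Arguments. Unset Strict Implicit. Unset Printing Implicit Defensive.
Import Order.TTheory GRing.Theory Num.Theory numFieldNormedType.Exports.
Local Open Scope ring_scope.

Section Connectivity.
Variables (n m : nat) (src tgt : 'I_m -> 'I_n).
Local Notation adj := (adjb src tgt).

Lemma adjbP (X : {set 'I_m}) u v : reflect (exists2 e, e \in X &
   ((src e == u) && (tgt e == v)) || ((src e == v) && (tgt e == u))) (adj X u v).
Proof. exact: exists_inP. Qed.

Lemma adjb_sym (X : {set 'I_m}) : symmetric (adj X).
Proof. by move=> u v; apply/adjbP/adjbP => -[e He H]; exists e => //; rewrite orbC. Qed.

Lemma connect_sym_adjb (X : {set 'I_m}) : connect_sym (adj X).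
Proof. exact/sym_connect_sym/adjb_sym. Qed.

Lemma adjb_edge (X : {set 'I_m}) e : e \in X -> adj X (src e) (tgt e).
Proof. by move=> He; apply/adjbP; exists e => //; rewrite !eqxx. Qed.

Lemma adjbS (X Y : {set 'I_m}) : X \subset Y -> subrel (adj X) (adj Y).
Proof.
move=> sXY u v /adjbP[e He H]; apply/adjbP; exists e => //; exact: (subsetP sXY).
Qed.

Lemma connect_adjbS (X Y : {set 'I_m}) :
  X \subset Y -> subrel (connect (adj X)) (connect (adj Y)).
Proof. by move=> sXY; apply: connect_sub => u v /(adjbS sXY)/connect1. Qed.

Lemma ncomp_setT (X : {set 'I_m}) :
  (forall e, e \notin X -> connect (adj X) (src e) (tgt e)) ->
  ncomp src tgt X = ncomp src tgt setT.
Proof.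
move=> hX; apply: eq_n_comp => x y; apply/idP/idP; first exact/connect_adjbS/subsetT.
apply: connect_sub => u v /adjbP[e _ H].
case He: (e \in X); first by apply: connect1; apply/adjbP; exists e.
have := hX e (negbT He).
by case/orP: H => /andP[/eqP <- /eqP <-] //; rewrite connect_sym_adjb.
Qed.

Lemma ncompE (X : {set 'I_m}) : ncomp src tgt X = #|[set z | roots (adj X) z]|.
Proof. by apply: eq_card => z; rewrite !inE andbT. Qed.

Lemma ncomp_ltn (X : {set 'I_m}) x y :
  connect (adj setT) x y -> ~~ connect (adj X) x y ->
  (ncomp src tgt setT < ncomp src tgt X)%N.
Proof.
move=> cxy ncxy; rewrite !ncompE.
set rT := root (adj setT); set rX := root (adj X).
have rTX z : rT (rX z) = rT z.
  apply/esym/rootP; first exact: connect_sym_adjb.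
  exact/(connect_adjbS (subsetT X))/connect_root.
have rootsX z : rX z \in [set z | roots (adj X) z].
  by rewrite inE roots_root //; apply: connect_sym_adjb.
have -> : [set z | roots (adj setT) z] = rT @: [set z | roots (adj X) z].
  apply/setP => z; rewrite inE; apply/idP/imsetP => [/eqP <- | [w _ ->]].
    by exists (rX z); rewrite ?rTX.
  by rewrite roots_root //; apply: connect_sym_adjb.
rewrite ltn_neqAle leq_imset_card andbT; apply/negP => /imset_injP inj.
have := inj _ _ (rootsX x) (rootsX y).
rewrite !rTX /rT (rootP (connect_sym_adjb _) cxy) => /(_ erefl) /rootP.
by rewrite (negbTE ncxy) => /(_ (connect_sym_adjb X)).
Qed.

End Connectivity.

Section Cuts.
Variables (R : realType) (n m : nat) (src tgt : 'I_m -> 'I_n).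
Local Notation adj := (adjb src tgt).
Implicit Types (A : {set 'I_n}) (C : {set 'I_m}).

Definition edge_cut A : {set 'I_m} := [set e | (src e \in A) != (tgt e \in A)].

Definition cut_sign A e : R := (src e \in A)%:R - (tgt e \in A)%:R.

Definition component C x : {set 'I_n} := [set z | connect (adj (~: C)) x z].

Definition net_outflow (I : 'rV[R]_m) A := \sum_e I 0 e * cut_sign A e.

Lemma edge_cut_closed A : closed (adj (~: edge_cut A)) A.
Proof.
move=> u v /adjbP[e]; rewrite !inE negbK => /eqP he.
by case/orP => /andP[/eqP <- /eqP <-].
Qed.

Lemma component_closed C x : closed (adj (~: C)) (component C x).
Proof.
by move=> u v h; rewrite !inE; exact: (connect_closed (connect_sym_adjb src tgt _) x h).
Qed.

Lemma component_sub C x A : closed (adj (~: C)) A -> x \in A -> component C x \subset A.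
Proof.
move=> clA xA; apply/subsetP => z; rewrite inE => cz.
by rewrite -(closed_connect clA cz).
Qed.

Lemma component_id C x : x \in component C x.
Proof. by rewrite inE connect0. Qed.

Lemma edge_cutS A A' : closed (adj (~: edge_cut A)) A' -> edge_cut A' \subset edge_cut A.
Proof.
move=> clA'; apply/subsetP => e; apply: contraLR => he.
have h : adj (~: edge_cut A) (src e) (tgt e) by apply: adjb_edge; rewrite inE.
by rewrite !inE negbK (clA' _ _ h).
Qed.

Lemma edge_cutC A : edge_cut (~: A) = edge_cut A.
Proof. by apply/setP => e; rewrite !inE; case: (src e \in A); case: (tgt e \in A). Qed.

Lemma cut_signC A e : cut_sign (~: A) e = - cut_sign A e.
Proof. by rewrite /cut_sign !inE; case: (src e \in A); case: (tgt e \in A) => /=; ring. Qed.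

Lemma cut_sign_notin A e : e \notin edge_cut A -> cut_sign A e = 0.
Proof. by rewrite inE negbK /cut_sign => /eqP ->; rewrite subrr. Qed.

Lemma net_outflowC I A : net_outflow I (~: A) = - net_outflow I A.
Proof.
by rewrite /net_outflow -sumrN; apply: eq_bigr => e _; rewrite cut_signC mulrN.
Qed.

Lemma net_outflow_setD I A A1 : A1 \subset A ->
  net_outflow I A = net_outflow I A1 + net_outflow I (A :\: A1).
Proof.
move=> /subsetP sA1; rewrite /net_outflow -big_split; apply: eq_bigr => e _ /=.
rewrite -mulrDr /cut_sign !inE; congr (_ * _).
move: (sA1 (src e)) (sA1 (tgt e)) => /implyP + /implyP.
by case: (src e \in A1); case: (src e \in A); case: (tgt e \in A1); case: (tgt e \in A)
  => //= _ _; ring.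
Qed.

Lemma net_outflow_cut0 I A : edge_cut A = set0 -> net_outflow I A = 0.
Proof.
move=> d0; rewrite /net_outflow big1 // => e _.
by rewrite cut_sign_notin ?mulr0 // d0 in_set0.
Qed.

(* Split [A] into the component [A1] of [x] avoiding the cut of [A] and the rest [A2]:
   both cuts lie in the cut of [A], and either both are strictly smaller or the cut
   of [A2] is empty. *)
Lemma net_outflow_component I A x e0 :
  e0 \in edge_cut A -> x \in A -> (x == src e0) || (x == tgt e0) ->
  (forall A', (#|edge_cut A'| < #|edge_cut A|)%N -> net_outflow I A' = 0) ->
  net_outflow I A = 0 \/
  net_outflow I A = net_outflow I (component (edge_cut A) x)
  /\ edge_cut (component (edge_cut A) x) = edge_cut A.
Proof.
move=> he0 xA hx IH.
have sA1 : component (edge_cut A) x \subset A.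
  exact: component_sub (@edge_cut_closed A) xA.
have x1 := component_id (edge_cut A) x.
have cl1 := @component_closed (edge_cut A) x.
move: (component _ x) sA1 x1 cl1 => A1 sA1 x1 cl1.
set A2 := A :\: A1.
have cl2 : closed (adj (~: edge_cut A)) A2.
  by move=> u v h; rewrite !in_setD (cl1 _ _ h) (edge_cut_closed h).
have s1 := edge_cutS cl1; have s2 := edge_cutS cl2.
have sub z : (z \in A1) ==> (z \in A) by apply/implyP/(subsetP sA1).
rewrite (net_outflow_setD I sA1).
have [d0 | [e1 he1]] := set_0Vmem (edge_cut A2).
  right; split; first by rewrite (net_outflow_cut0 I d0) addr0.
  apply/eqP; rewrite eqEsubset s1 /=; apply/subsetP => e he.
  have : e \notin edge_cut A2 by rewrite d0 in_set0.
  move: he (sub (src e)) (sub (tgt e)); rewrite /A2 !inE.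
  by case: (src e \in A1); case: (src e \in A); case: (tgt e \in A1); case: (tgt e \in A).
left; rewrite !IH ?addr0 //; apply: proper_card; apply/properP; split => //.
  exists e0 => //; move: he0 x1 (sub (src e0)) (sub (tgt e0)); rewrite /A2 !inE.
  by case/orP: hx => /eqP ->;
    case: (src e0 \in A1); case: (src e0 \in A); case: (tgt e0 \in A1); case: (tgt e0 \in A).
exists e1; first exact: (subsetP s2).
move: he1 (subsetP s2 _ he1) (sub (src e1)) (sub (tgt e1)); rewrite /A2 !inE.
by case: (src e1 \in A1); case: (src e1 \in A); case: (tgt e1 \in A1); case: (tgt e1 \in A).
Qed.

(* If the components of [x] and [y] after deleting [C] both have boundary [C], then
   [C] is a bond: deleting any proper part of it leaves [x] and [y] connected. *)
Lemma bond_cutset C x y :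
  edge_cut (component C x) = C -> edge_cut (component C y) = C ->
  connect (adj setT) x y -> ~~ connect (adj (~: C)) x y -> is_cutset src tgt C.
Proof.
move=> Cx Cy cxy nxy.
have [conx cony] : (forall z, z \in component C x -> connect (adj (~: C)) x z)
                /\ (forall z, z \in component C y -> connect (adj (~: C)) y z).
  by split=> z; rewrite inE.
have disj z : z \in component C x -> z \in component C y -> False.
  move=> /conx cz /cony; rewrite connect_sym_adjb => cz'.
  by move: nxy; rewrite (connect_trans cz cz').
move: Cx Cy conx cony disj; set Ax := component C x; set Ay := component C y.
clearbody Ax Ay => Cx Cy conx cony disj.
have ends e : e \in C ->
    ((src e \in Ax) && (tgt e \in Ay)) || ((src e \in Ay) && (tgt e \in Ax)).
  move=> he; move: (he) (he); rewrite -{1}Cx -Cy !inE.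
  move: (disj (src e)) (disj (tgt e)).
  by case: (src e \in Ax); case: (src e \in Ay); case: (tgt e \in Ax); case: (tgt e \in Ay)
    => //= h1 h2; [case: (h1 isT isT) | case: (h2 isT isT)].
apply/andP; split; first exact: ncomp_ltn cxy nxy.
apply/forallP => C'; apply/implyP => /properP [sub [f fC fC']].
rewrite (@ncomp_setT _ _ src tgt (~: C')) ?ltnn // => e; rewrite inE negbK => eC'.
have G : subrel (connect (adj (~: C))) (connect (adj (~: C'))).
  by apply: connect_adjbS; rewrite setCS.
have adjf : adj (~: C') (src f) (tgt f) by apply: adjb_edge; rewrite inE.
have fxy : connect (adj (~: C')) x y.
  case/orP: (ends f fC) => /andP[fa fb].
    apply: connect_trans (G _ _ (conx _ fa)) _; apply: connect_trans (connect1 adjf) _.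
    by rewrite connect_sym_adjb; apply/G/cony.
  apply: connect_trans (G _ _ (conx _ fb)) _; rewrite adjb_sym in adjf.
  apply: connect_trans (connect1 adjf) _.
  by rewrite connect_sym_adjb; apply/G/cony.
have cx z : (z \in Ax) || (z \in Ay) -> connect (adj (~: C')) x z.
  case/orP => [zA|zB]; first exact: G (conx z zA).
  exact: connect_trans fxy (G _ _ (cony z zB)).
have [hs ht] : ((src e \in Ax) || (src e \in Ay)) /\ ((tgt e \in Ax) || (tgt e \in Ay)).
  by case/orP: (ends e (subsetP sub e eC')) => /andP[-> ->]; rewrite ?orbT.
by apply: connect_trans (cx _ ht); rewrite connect_sym_adjb; apply: cx.
Qed.

Lemma net_outflow_eq0 (I : 'rV[R]_m) :
  (forall u, cutset_vec src tgt u -> \sum_e I 0 e * u 0 e = 0) ->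
  forall A, net_outflow I A = 0.
Proof.
move=> hcut A; have [k] := ubnP #|edge_cut A|; elim: k A => // k IH A hk.
have IH' A' : (#|edge_cut A'| < #|edge_cut A|)%N -> net_outflow I A' = 0.
  by move=> h; apply: IH; exact: leq_trans h hk.
have [d0 | [e0 he0]] := set_0Vmem (edge_cut A); first exact: net_outflow_cut0.
pose x := if src e0 \in A then src e0 else tgt e0.
pose y := if src e0 \in A then tgt e0 else src e0.
have [xA yA] : x \in A /\ y \notin A.
  rewrite /x /y; move: he0; rewrite inE.
  by case hs: (src e0 \in A); case ht: (tgt e0 \in A); rewrite /= ?hs ?ht.
have hx : (x == src e0) || (x == tgt e0) by rewrite /x; case: ifP; rewrite eqxx ?orbT.
have hy : (y == src e0) || (y == tgt e0) by rewrite /y; case: ifP; rewrite eqxx ?orbT.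
have hxy : adj setT x y.
  by apply/adjbP; exists e0; rewrite ?inE // /x /y; case: ifP; rewrite !eqxx ?orbT.
have [//|[E1 D1]] := net_outflow_component he0 xA hx IH'.
set Ax := component (edge_cut A) x in E1 D1.
have nxy : ~~ connect (adj (~: edge_cut A)) x y.
  apply: contra yA => cxy; apply: (subsetP (component_sub (@edge_cut_closed A) xA)).
  by rewrite inE.
have he0' : e0 \in edge_cut (~: Ax) by rewrite edge_cutC D1.
have yW : y \in ~: Ax by rewrite !inE.
have IH'' A' : (#|edge_cut A'| < #|edge_cut (~: Ax)|)%N -> net_outflow I A' = 0.
  by rewrite edge_cutC D1; apply: IH'.
have [hW | [E2 D2]] := net_outflow_component he0' yW hy IH''.
  by rewrite E1 -[net_outflow I _]opprK -net_outflowC hW oppr0.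
rewrite edge_cutC D1 in E2 D2.
have cut : is_cutset src tgt (edge_cut A) := bond_cutset D1 D2 (connect1 hxy) nxy.
rewrite E1 /net_outflow; transitivity (\sum_e I 0 e * (\row_e cut_sign Ax e) 0 e).
  by apply: eq_bigr => e _; rewrite mxE.
apply: hcut; exists (edge_cut Ax), Ax; split; first by rewrite D1.
  by move=> e; rewrite inE.
apply/rowP => e; rewrite !mxE /cut_sign [e \in edge_cut _]inE.
by case: (src e \in Ax); case: (tgt e \in Ax); rewrite /= ?subr0 ?sub0r ?subrr.
Qed.

End Cuts.

Section Potentials.
Variables (R : realType) (n m : nat) (src tgt : 'I_m -> 'I_n).
Local Notation adj := (adjb src tgt).
Local Notation sst := (step_start src tgt).
Local Notation sen := (step_end src tgt).
Implicit Types (X : {set 'I_m}) (x : 'I_n).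

Definition step_sign (s : 'I_m * bool) : R := if s.2 then 1 else -1.

(* A step from [a] to [b] along a branch of [X]; the default [(d, true)] is junk,
   only used when [a] and [b] are not adjacent in [X]. *)
Definition step_in (d : 'I_m) X (a b : 'I_n) : 'I_m * bool :=
  if [pick e in X | (src e == a) && (tgt e == b)] is Some e then (e, true)
  else if [pick e in X | (src e == b) && (tgt e == a)] is Some e then (e, false)
  else (d, true).

Lemma step_inP d X a b : adj X a b ->
  [/\ sst (step_in d X a b) = a, sen (step_in d X a b) = b & (step_in d X a b).1 \in X].
Proof.
move=> /adjbP[e eX he]; rewrite /step_in.
case: pickP => [f /andP[fX /andP[/eqP sf /eqP tf]] | n1] //=.
case: pickP => [f /andP[fX /andP[/eqP sf /eqP tf]] | n2] //=.
by case/orP: he => he; [move: (n1 e) | move: (n2 e)]; rewrite eX he.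
Qed.

Lemma step_start_incident (s : 'I_m * bool) : (src s.1 == sst s) || (tgt s.1 == sst s).
Proof. by case: s => e [] /=; rewrite /step_start /= eqxx ?orbT. Qed.

Lemma step_endpoints (s : 'I_m * bool) :
  (src s.1 \in [:: sst s; sen s]) && (tgt s.1 \in [:: sst s; sen s]).
Proof. by case: s => e [] /=; rewrite /step_start /step_end /= !inE !eqxx ?orbT. Qed.

Section Steps.
Variables (d : 'I_m) (X : {set 'I_m}).
Local Notation steps := (pairmap (step_in d X)).

Lemma steps_start x p : path (adj X) x p -> map sst (steps x p) = belast x p.
Proof.
elim: p x => //= y p IH x /andP[hxy hp]; rewrite IH //.
by case: (step_inP d hxy) => ->.
Qed.

Lemma steps_in x p : path (adj X) x p -> forall s, s \in steps x p -> s.1 \in X.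
Proof.
elim: p x => //= y p IH x /andP[hxy hp] s; rewrite inE => /orP[/eqP -> | hs].
  by case: (step_inP d hxy).
exact: IH hp s hs.
Qed.

Lemma steps_endpoints x p : path (adj X) x p ->
  forall s, s \in steps x p -> (src s.1 \in x :: p) && (tgt s.1 \in x :: p).
Proof.
elim: p x => //= y p IH x /andP[hxy hp] s; rewrite inE => /orP[/eqP -> | hs].
  case: (step_inP d hxy) => h1 h2 _.
  case/andP: (step_endpoints (step_in d X x y)); rewrite h1 h2 !inE.
  by case/orP=> /eqP -> /orP[] /eqP ->; rewrite !eqxx ?orbT.
by case/andP: (IH _ hp s hs) => h1 h2; rewrite !inE in h1 h2 *; rewrite h1 h2 !orbT.
Qed.

Lemma steps_uniq x p : path (adj X) x p -> uniq (x :: p) -> uniq (map fst (steps x p)).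
Proof.
elim: p x => //= y p IH x /andP[hxy hp] /andP[nx u].
rewrite IH // andbT; apply/mapP => -[s sin es].
case/andP: (steps_endpoints hp sin) => h1 h2.
case: (step_inP d hxy) => h3 _ _.
move: (step_start_incident (step_in d X x y)); rewrite h3 es => /orP[/eqP hx|/eqP hx];
  by move: nx; rewrite -hx ?h1 ?h2.
Qed.

Lemma steps_cycle x p : path (adj X) x p -> forall s0 sl, sen s0 = x -> sst sl = last x p ->
  path (fun s1 s2 => sen s1 == sst s2) s0 (rcons (steps x p) sl).
Proof.
elim: p x => [|y p IH] x /=; first by move=> _ s0 sl -> ->; rewrite eqxx.
move=> /andP[hxy hp] s0 sl h0 hl.
case: (step_inP d hxy) => h3 h4 _.
by rewrite h0 h3 eqxx /=; apply: IH.
Qed.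

Lemma steps_sum (V : 'rV[R]_m) (phi : 'I_n -> R) x p :
  (forall e, e \in X -> V 0 e = phi (src e) - phi (tgt e)) -> path (adj X) x p ->
  \sum_(s <- steps x p) step_sign s * V 0 s.1 = phi x - phi (last x p).
Proof.
move=> hX; elim: p x => [|y p IH] x /=; first by rewrite big_nil subrr.
move=> /andP[hxy hp]; rewrite big_cons IH //.
case: (step_inP d hxy); move: (step_in d X x y) => s <- <- /hX.
by case: s => e [] /= ->; rewrite /step_sign /step_start /step_end /=; ring.
Qed.

End Steps.

Lemma loop_closing X e0 x p : e0 \notin X -> path (adj X) x p -> uniq (x :: p) ->
  x = tgt e0 -> last x p = src e0 -> is_loop src tgt ((e0, true) :: pairmap (step_in e0 X) x p).
Proof.
move=> e0X hp up hx hl; apply/and4P; split => //=.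
- rewrite (steps_uniq e0 hp up) andbT; apply/mapP => -[s sin es].
  by move: e0X; rewrite es (steps_in hp sin).
- rewrite (steps_start _ hp); move: up; rewrite lastI rcons_uniq hl.
  by rewrite /step_start.
- by apply: steps_cycle hp _ _ _ _; rewrite /step_start /step_end.
Qed.

(* The potential is built branch by branch: a new branch [e] either closes a loop,
   or the potential is shifted on the component of [tgt e]. *)
Lemma loop_free_potential (V : 'rV[R]_m) :
  (forall p, is_loop src tgt p -> \sum_(s <- p) step_sign s * V 0 s.1 = 0) ->
  exists phi : 'I_n -> R, forall e, V 0 e = phi (src e) - phi (tgt e).
Proof.
move=> hl.
suff H k : (k <= m)%N -> exists phi : 'I_n -> R,
    forall e : 'I_m, (e < k)%N -> V 0 e = phi (src e) - phi (tgt e).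
  by have [phi hphi] := H m (leqnn m); exists phi => e; apply: hphi.
elim: k => [|k IH] hk; first by exists (fun _ => 0).
have [phi hphi] := IH (ltnW hk).
pose e0 := Ordinal hk; pose X := [set e : 'I_m | (e < k)%N].
have hX e : e \in X -> V 0 e = phi (src e) - phi (tgt e) by rewrite inE; apply: hphi.
have e0X : e0 \notin X by rewrite inE ltnn.
have eq_e0 (e : 'I_m) : (e < k.+1)%N -> ~~ (e < k)%N -> e = e0.
  by rewrite ltnS leq_eqVlt => /orP[/eqP he _ | -> //]; exact: val_inj.
have [cc | ncc] := boolP (connect (adj X) (tgt e0) (src e0)).
  exists phi => e ek; have [/hphi // | /(eq_e0 _ ek) ->] := boolP (e < k)%N.
  case/connectP: cc => p hp; case: (shortenP hp) => p' hp' up' _ hl0'.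
  have := hl _ (loop_closing e0X hp' up' erefl (esym hl0')).
  by rewrite big_cons (steps_sum _ hX hp') -hl0' /step_sign /= mul1r => h; lra.
pose shift := phi (src e0) - phi (tgt e0) - V 0 e0.
exists (fun z => phi z + (if connect (adj X) (tgt e0) z then shift else 0)) => e ek.
have [ek' | /(eq_e0 _ ek) ->] := boolP (e < k)%N; last first.
  by rewrite connect0 (negbTE ncc) /shift; ring.
have eX : e \in X by rewrite inE.
have -> : connect (adj X) (tgt e0) (src e) = connect (adj X) (tgt e0) (tgt e).
  exact: (connect_closed (connect_sym_adjb src tgt X) (tgt e0) (adjb_edge src tgt eX)).
by rewrite (hphi _ ek'); case: (connect _ _ (tgt e)); ring.
Qed.

End Potentials.

Section Tellegen.
Variables (R : realType) (n m : nat) (src tgt : 'I_m -> 'I_n).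

Lemma mul_row_trE (V u : 'rV[R]_m) : (V *m u^T) 0 0 = \sum_e V 0 e * u 0 e.
Proof. by rewrite !mxE; apply: eq_bigr => e _; rewrite !mxE. Qed.

Lemma row_orthogonal_submx r (M : 'M[R]_(r, m)) (V u : 'rV[R]_m) :
  V *m M^T = 0 -> (u <= M)%MS -> \sum_e V 0 e * u 0 e = 0.
Proof.
by move=> hVM /submxP[w ->]; rewrite -mul_row_trE trmx_mul mulmxA hVM mul0mx mxE.
Qed.

Lemma loop_sum_eq0 r (B : 'M[R]_(r, m)) (V : 'rV[R]_m) :
  reduced_loop_matrix src tgt B -> V *m B^T = 0 ->
  forall p, is_loop src tgt p -> \sum_(s <- p) step_sign R s * V 0 s.1 = 0.
Proof.
case=> _ _ hall hVB p hp.
have /hall lv : loop_vec src tgt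
    (\row_e \sum_(s <- p | s.1 == e) (if s.2 then 1 else -1) : 'rV[R]_m) by exists p.
rewrite -[RHS](row_orthogonal_submx hVB lv).
under [RHS]eq_bigr => e _ do rewrite mxE mulr_sumr big_mkcond.
rewrite exchange_big; apply: eq_bigr => s _ /=.
rewrite (bigD1 s.1) //= eqxx big1 ?addr0 => [|e /negbTE he]; last by rewrite eq_sym he.
by rewrite mulrC.
Qed.

Theorem tellegen rb rd (B : 'M[R]_(rb, m)) (D : 'M[R]_(rd, m)) (V I : 'rV[R]_m) :
  reduced_loop_matrix src tgt B -> reduced_cutset_matrix src tgt D ->
  V *m B^T = 0 -> I *m D^T = 0 -> V *m I^T = 0.
Proof.
move=> hB [_ _ hcut] hVB hID.
have [phi hphi] := loop_free_potential (loop_sum_eq0 hB hVB).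
have KCL A : net_outflow src tgt I A = 0.
  by apply: net_outflow_eq0 => u /hcut; apply: row_orthogonal_submx.
apply/matrixP => i j; rewrite !ord1 mul_row_trE mxE.
have delta a : \sum_z phi z * (a \in [set z])%:R = phi a.
  rewrite (bigD1 a) //= inE eqxx mulr1 big1 ?addr0 // => z.
  by rewrite inE eq_sym => /negbTE ->; rewrite mulr0.
(* Sum the node equations [KCL [set z]] weighted by the potential. *)
transitivity (\sum_z phi z * net_outflow src tgt I [set z]); last first.
  by rewrite big1 // => z _; rewrite KCL mulr0.
under [RHS]eq_bigr => z _ do rewrite /net_outflow mulr_sumr.
rewrite exchange_big; apply: eq_bigr => e _ /=.
under eq_bigr => z _ do rewrite /cut_sign mulrCA mulrBr.
by rewrite -mulr_sumr sumrB !delta hphi mulrC.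
Qed.

End Tellegen.

Section MatrixFacts.
Variable R : fieldType.

Lemma row_mx_exists a b (x : 'rV[R]_(a + b)) : exists u v, x = row_mx u v.
Proof. by exists (lsubmx x), (rsubmx x); rewrite hsubmxK. Qed.

Lemma eq_row_mxE a b (u1 u2 : 'rV[R]_a) (v1 v2 : 'rV[R]_b) :
  (row_mx u1 v1 == row_mx u2 v2) = (u1 == u2) && (v1 == v2).
Proof. by rewrite -subr_eq0 opp_row_mx add_row_mx row_mx_eq0 !subr_eq0. Qed.

Lemma row_mx_linear a b k (u1 u2 : 'rV[R]_a) (v1 v2 : 'rV[R]_b) :
  row_mx (k *: u1 + u2) (k *: v1 + v2) = k *: row_mx u1 v1 + row_mx u2 v2.
Proof. by rewrite scale_row_mx add_row_mx. Qed.

Lemma mul_col_mx10 a b (x : 'rV[R]_(a + b)) : x *m col_mx 1%:M 0 = lsubmx x.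
Proof. by rewrite -{1}[x]hsubmxK mul_row_col mulmx1 mulmx0 addr0. Qed.

Lemma submx_row_block_diag a b c d (u : 'rV[R]_a) (v : 'rV[R]_b)
    (A : 'M[R]_(c, a)) (B : 'M[R]_(d, b)) :
  (row_mx u v <= block_mx A 0 0 B)%MS = (u <= A)%MS && (v <= B)%MS.
Proof.
apply/idP/andP.
  case/submxP => w; rewrite -[w]hsubmxK mul_row_block !mulmx0 addr0 add0r.
  by case/eq_row_mx => -> ->; rewrite !submxMl.
case=> /submxP[w1 ->] /submxP[w2 ->].
have -> : row_mx (w1 *m A) (w2 *m B) = row_mx w1 w2 *m block_mx A 0 0 B.
  by rewrite mul_row_block !mulmx0 addr0 add0r.
exact: submxMl.
Qed.

Lemma linear_mulmx a b (f : 'rV[R]_a -> 'rV[R]_b) :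
  linear f -> exists M, forall x, f x = x *m M.
Proof.
move=> hf; have f0 : f 0 = 0.
  by apply: (addrI (f 0)); move: (hf 1 0 0); rewrite !scale1r !addr0 => /esym.
exists (\matrix_(i, j) f (delta_mx 0 i) 0 j) => x.
rewrite {1}[x]row_sum_delta mulmx_sum_row.
have -> s : f (\sum_(j <- s) x 0 j *: delta_mx 0 j) = \sum_(j <- s) x 0 j *: f (delta_mx 0 j).
  by elim: s => [|j s IH]; rewrite ?big_nil ?f0 // !big_cons hf IH.
by apply: eq_bigr => j _; congr (_ *: _); apply/rowP => k; rewrite !mxE.
Qed.

Lemma mxrank_linear_bij a b (S : 'M[R]_a) (T : 'M[R]_b)
    (f : 'rV[R]_a -> 'rV[R]_b) (g : 'rV[R]_b -> 'rV[R]_a) : linear f -> linear g ->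
  (forall x, (x <= S)%MS -> (f x <= T)%MS /\ g (f x) = x) ->
  (forall y, (y <= T)%MS -> (g y <= S)%MS /\ f (g y) = y) ->
  \rank S = \rank T.
Proof.
move=> /linear_mulmx[F hF] /linear_mulmx[G hG] fST gTS.
have rank_le c d (S' : 'M[R]_c) (T' : 'M[R]_d) F' G' :
    (forall x : 'rV_c, (x <= S')%MS -> (x *m F' <= T')%MS /\ x *m F' *m G' = x) ->
    (\rank S' <= \rank T')%N.
  move=> h; have E : S' *m F' *m G' = S'.
    by apply/row_matrixP => i; rewrite !row_mul; case: (h _ (row_sub i S')).
  rewrite -{1}E; apply: leq_trans (mxrankM_maxl _ _) (mxrankS _).
  by apply/row_subP => i; rewrite row_mul; case: (h _ (row_sub i S')).
apply/eqP; rewrite eqn_leq (rank_le _ _ _ _ F G) ?(rank_le _ _ _ _ G F) // => [y|x].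
  by rewrite -hF -hG; apply: gTS.
by rewrite -hF -hG; apply: fST.
Qed.

Definition colsel N (K : {set 'I_N}) : 'M[R]_(N, #|K|) := \matrix_(e, j) (e == enum_val j)%:R.

Lemma mul_colselE r N (K : {set 'I_N}) (M : 'M[R]_(r, N)) i j :
  (M *m colsel K) i j = M i (enum_val j).
Proof.
rewrite !mxE (bigD1 (enum_val j)) //= mxE eqxx mulr1 big1 ?addr0 // => e he.
by rewrite mxE (negbTE he) mulr0.
Qed.

Lemma subcolsE r N (K : {set 'I_N}) (M : 'M[R]_(r, N)) : subcols K M = M *m colsel K.
Proof. by apply/matrixP => i j; rewrite mul_colselE /subcols !mxE. Qed.

Lemma colselK N (K : {set 'I_N}) : (colsel K)^T *m colsel K = 1%:M.
Proof.
apply/matrixP => j k; rewrite mul_colselE !mxE (inj_eq enum_val_inj) eq_sym.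
by case: eqP.
Qed.

Lemma mul_colsel_tr_notin r N (K : {set 'I_N}) (c : 'M[R]_(r, #|K|)) i e :
  e \notin K -> (c *m (colsel K)^T) i e = 0.
Proof.
move=> he; rewrite !mxE big1 // => j _; rewrite !mxE.
case: eqP => [ej | _]; last by rewrite mulr0.
by move: he; rewrite ej enum_valP.
Qed.

Lemma colsel_supp N (K : {set 'I_N}) (X : 'rV[R]_N) :
  (forall e, e \notin K -> X 0 e = 0) -> X *m colsel K *m (colsel K)^T = X.
Proof.
move=> hX; apply/rowP => e; rewrite !mxE.
under eq_bigr do rewrite mul_colselE !mxE.
have [eK | eK] := boolP (e \in K); last first.
  rewrite hX // big1 // => j _.
  by case: eqP => [ej | _]; [move: eK; rewrite ej enum_valP | rewrite mulr0].
rewrite (bigD1 (enum_rank_in eK e)) //= enum_rankK_in // eqxx mulr1 big1 ?addr0 // => j hj.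
case: eqP => [ej | _]; last by rewrite mulr0.
suff E : enum_rank_in eK e = j by move: hj; rewrite E eqxx.
by apply: enum_val_inj; rewrite enum_rankK_in.
Qed.

End MatrixFacts.

Section PositiveDefinite.
Variable R : realType.

Lemma posdef_quad_ge0 k (M : 'M[R]_k) (u : 'rV[R]_k) : posdef M -> 0 <= (u *m M *m u^T) 0 0.
Proof.
move=> hM; have [-> | /hM/ltW //] := eqVneq u 0.
by rewrite !mul0mx mxE.
Qed.

Lemma posdef_quad_addr_eq0 a b (M : 'M[R]_a) (N : 'M[R]_b) (u : 'rV_a) (v : 'rV_b) :
  posdef M -> posdef N -> (u *m M *m u^T) 0 0 + (v *m N *m v^T) 0 0 = 0 -> u = 0 /\ v = 0.
Proof.
move=> hM hN /eqP; rewrite paddr_eq0 ?posdef_quad_ge0 // => /andP[/eqP hu /eqP hv].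
split; [have [//|/hM] := eqVneq u 0 | have [//|/hN] := eqVneq v 0]; by rewrite ?hu ?hv ltxx.
Qed.

Lemma quad_form_tr k (M : 'M[R]_k) (u : 'rV[R]_k) :
  (u *m M^T *m u^T) 0 0 = (u *m M *m u^T) 0 0.
Proof.
transitivity ((u *m M^T *m u^T)^T 0 0); first by rewrite [RHS]mxE.
by rewrite !trmx_mul !trmxK mulmxA.
Qed.

End PositiveDefinite.

Section Linearization.
Variables (R : realType) (nm nc nr nu nw nl ng nj rb rd : nat).
Local Notation Q := (nbr4 nm nc nr nu).
Local Notation P := (nbr4 nw nl ng nj).
Variables (Em Zm : 'M[R]_nm) (Ec : 'M[R]_nc) (Rr : 'M[R]_nr) (Rw Yw : 'M[R]_nw)
  (Rl : 'M[R]_nl) (Gg : 'M[R]_ng).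
Variables (B : 'M[R]_(rb, Q + P)) (D : 'M[R]_(rd, Q + P)).
Local Notation K := (linK Em Zm Ec Rr Rw Yw Rl Gg B D).
Local Notation VL := (VLset nm nc nr nu nw nl ng nj).
Local Notation IC := (ICset nm nc nr nu nw nl ng nj).

Lemma mulNtr_add_eq0 a b c (x : 'rV[R]_a) (y : 'rV[R]_b) (v : 'rV[R]_c) F G :
  (x *m (- F)^T + (v + y *m (- G)^T) == 0) = (v == x *m F^T + y *m G^T).
Proof. by rewrite !linearN /= addrCA -opprD subr_eq0. Qed.

Lemma mulNtr_addr_eq0 a b c (x : 'rV[R]_a) (y : 'rV[R]_b) (v : 'rV[R]_c) F G :
  (x *m (- F)^T + (y *m (- G)^T + v) == 0) = (v == x *m F^T + y *m G^T).
Proof. by rewrite !linearN /= addrA addrC -opprD subr_eq0. Qed.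

Lemma mul_row_mx_tr r (vq : 'rV[R]_Q) (vp : 'rV[R]_P) (M : 'M[R]_(r, Q + P)) :
  vq *m (lsubmx M)^T + vp *m (rsubmx M)^T = row_mx vq vp *m M^T.
Proof. by rewrite -{3}[M]hsubmxK tr_row_mx mul_row_col. Qed.

Lemma linK_kernelE (qmc : 'rV[R]_(nm + nc)) (pwl : 'rV[R]_(nw + nl))
    (vq iq : 'rV[R]_Q) (vp ip : 'rV[R]_P) :
  (row_mx qmc (row_mx pwl (row_mx vq (row_mx iq (row_mx vp ip)))) *m K^T == 0) =
  [&& lsubmx iq == 0, lsubmx vp == 0,
      vq == qmc *m (Fq nr nu Em Ec)^T + iq *m (Fi nc nu Zm Rr)^T,
      ip == pwl *m (Gp ng nj Rw Rl)^T + vp *m (Gv nl nj Yw Gg)^T,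
      row_mx vq vp *m B^T == 0 & row_mx iq ip *m D^T == 0].
Proof.
rewrite -mulNtr_add_eq0 -mulNtr_addr_eq0 -!mul_row_mx_tr.
rewrite /linK !tr_col_mx !mul_mx_row !row_mx_eq0 !tr_row_mx !mul_row_col.
by rewrite !trmx0 !mulmx0 ?trmx1 ?mulmx1 !add0r ?addr0 ?mul_col_mx10.
Qed.

Lemma mul_Fq_tr (qm : 'rV[R]_nm) (qc : 'rV[R]_nc) :
  row_mx qm qc *m (Fq nr nu Em Ec)^T = row_mx (row_mx (qm *m Em^T) (qc *m Ec^T)) 0.
Proof.
by rewrite /Fq tr_col_mx tr_block_mx !trmx0 mul_mx_row mul_row_block !mulmx0 addr0 add0r.
Qed.

Lemma mul_Fi_tr (im : 'rV[R]_nm) (ic : 'rV[R]_nc) (ir : 'rV[R]_nr) (iu : 'rV[R]_nu) :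
  row_mx (row_mx im ic) (row_mx ir iu) *m (Fi nc nu Zm Rr)^T =
  row_mx (row_mx (im *m Zm^T) 0) (row_mx (ir *m Rr^T) 0).
Proof. by rewrite /Fi !tr_block_mx !trmx0 !mul_row_block !mulmx0 !addr0 !add0r. Qed.

Lemma mul_Gp_tr (pw : 'rV[R]_nw) (pl : 'rV[R]_nl) :
  row_mx pw pl *m (Gp ng nj Rw Rl)^T = row_mx (row_mx (pw *m Rw^T) (pl *m Rl^T)) 0.
Proof.
by rewrite /Gp tr_col_mx tr_block_mx !trmx0 mul_mx_row mul_row_block !mulmx0 addr0 add0r.
Qed.

Lemma mul_Gv_tr (vw : 'rV[R]_nw) (vl : 'rV[R]_nl) (vg : 'rV[R]_ng) (vj : 'rV[R]_nj) :
  row_mx (row_mx vw vl) (row_mx vg vj) *m (Gv nl nj Yw Gg)^T =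
  row_mx (row_mx (vw *m Yw^T) 0) (row_mx (vg *m Gg^T) 0).
Proof. by rewrite /Gv !tr_block_mx !trmx0 !mul_row_block !mulmx0 !addr0 !add0r. Qed.

Lemma VL_row_supp (iu : 'rV[R]_nu) (il : 'rV[R]_nl) e : e \notin VL ->
  (row_mx (row_mx (row_mx 0 0) (row_mx 0 iu))
          (row_mx (row_mx 0 il) (row_mx (0 : 'rV_ng) (0 : 'rV_nj)))) 0 e = 0.
Proof.
rewrite /VLset /brange !inE => he.
rewrite mxE; case: splitP => j ej; rewrite mxE; case: splitP => k ek; rewrite mxE;
  case: splitP => l el; rewrite ?mxE //; exfalso; move: he; apply/negP/negPn;
  rewrite ej ?ek ?el; move: (ltn_ord l) (ltn_ord k) (ltn_ord j); lia.
Qed.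

Lemma IC_row_supp (vc : 'rV[R]_nc) (vj : 'rV[R]_nj) e : e \notin IC ->
  (row_mx (row_mx (row_mx (0 : 'rV_nm) vc) (row_mx (0 : 'rV_nr) (0 : 'rV_nu)))
          (row_mx (row_mx (0 : 'rV_nw) (0 : 'rV_nl)) (row_mx 0 vj))) 0 e = 0.
Proof.
rewrite /ICset /brange !inE => he.
rewrite mxE; case: splitP => j ej; rewrite mxE; case: splitP => k ek; rewrite mxE;
  case: splitP => l el; rewrite ?mxE //; exfalso; move: he; apply/negP/negPn;
  rewrite ej ?ek ?el; move: (ltn_ord l) (ltn_ord k) (ltn_ord j); lia.
Qed.

Lemma VL_suppE (X : 'rV[R]_(Q + P)) : (forall e, e \notin VL -> X 0 e = 0) ->
  X = row_mx (row_mx (row_mx 0 0) (row_mx 0 (rsubmx (rsubmx (lsubmx X)))))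
             (row_mx (row_mx 0 (rsubmx (lsubmx (rsubmx X)))) (row_mx 0 0)).
Proof.
move=> hX; apply/rowP => e.
rewrite mxE; case: splitP => j ej; rewrite mxE; case: splitP => k ek; rewrite mxE;
  case: splitP => l el; rewrite ?mxE;
  (apply: hX; rewrite /VLset /brange !inE; apply/negP;
   rewrite ej ?ek ?el; move: (ltn_ord l) (ltn_ord k) (ltn_ord j); lia) ||
  (congr (X 0 _); apply: val_inj => /=; move: (ltn_ord l) (ltn_ord k) (ltn_ord j); lia).
Qed.

Lemma IC_suppE (X : 'rV[R]_(Q + P)) : (forall e, e \notin IC -> X 0 e = 0) ->
  X = row_mx (row_mx (row_mx 0 (rsubmx (lsubmx (lsubmx X)))) (row_mx 0 0))
             (row_mx (row_mx 0 0) (row_mx 0 (rsubmx (rsubmx (rsubmx X))))).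
Proof.
move=> hX; apply/rowP => e.
rewrite mxE; case: splitP => j ej; rewrite mxE; case: splitP => k ek; rewrite mxE;
  case: splitP => l el; rewrite ?mxE;
  (apply: hX; rewrite /ICset /brange !inE; apply/negP;
   rewrite ej ?ek ?el; move: (ltn_ord l) (ltn_ord k) (ltn_ord j); lia) ||
  (congr (X 0 _); apply: val_inj => /=; move: (ltn_ord l) (ltn_ord k) (ltn_ord j); lia).
Qed.

(* A kernel vector is determined by q_m, phi_w, the branch currents on VL and the
   branch voltages on IC; [params_kernel] recovers q_c and phi_l through Ec and Rl. *)
Definition kernel_params (x : 'rV[R]_((nm + nc) + ((nw + nl) + (Q + (Q + (P + P))))))
    : 'rV[R]_(nm + (nw + (#|VL| + #|IC|))) :=
  let vq := lsubmx (rsubmx (rsubmx x)) in let iq := lsubmx (rsubmx (rsubmx (rsubmx x))) in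
  let vp := lsubmx (rsubmx (rsubmx (rsubmx (rsubmx x)))) in
  let ip := rsubmx (rsubmx (rsubmx (rsubmx (rsubmx x)))) in
  row_mx (lsubmx (lsubmx x)) (row_mx (lsubmx (lsubmx (rsubmx x)))
    (row_mx (row_mx iq ip *m colsel R VL) (row_mx vq vp *m colsel R IC))).

Definition params_kernel (y : 'rV[R]_(nm + (nw + (#|VL| + #|IC|))))
    : 'rV[R]_((nm + nc) + ((nw + nl) + (Q + (Q + (P + P))))) :=
  let I := lsubmx (rsubmx (rsubmx y)) *m (colsel R VL)^T in
  let V := rsubmx (rsubmx (rsubmx y)) *m (colsel R IC)^T in
  row_mx (row_mx (lsubmx y) (rsubmx (lsubmx (lsubmx V)) *m invmx Ec^T))
    (row_mx (row_mx (lsubmx (rsubmx y)) (rsubmx (lsubmx (rsubmx I)) *m invmx Rl^T))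
      (row_mx (lsubmx V) (row_mx (lsubmx I) (row_mx (rsubmx V) (rsubmx I))))).

Definition param_space : 'M[R]_(nm + (nw + (#|VL| + #|IC|))) :=
  block_mx 1%:M 0 0 (block_mx 1%:M 0 0
    (block_mx (kermx (D *m colsel R VL)^T) 0 0 (kermx (B *m colsel R IC)^T))).

Lemma kernel_params_linear : linear kernel_params.
Proof.
move=> k x y; rewrite /kernel_params !linearP /=.
by rewrite !row_mx_linear !mulmxDl -!scalemxAl !row_mx_linear.
Qed.

Lemma params_kernel_linear : linear params_kernel.
Proof.
move=> k x y; rewrite /params_kernel !linearP /= !mulmxDl -!scalemxAl !linearP /=.
by rewrite !mulmxDl -!scalemxAl !row_mx_linear.
Qed.

Lemma mxrank_param_space : \rank param_space =
  (nm + nw + \rank (kermx (D *m colsel R VL)^T) + \rank (kermx (B *m colsel R IC)^T))%N.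
Proof. by rewrite !rank_diag_block_mx !mxrank1 !addnA. Qed.

Hypotheses (hEm : Em = 0) (hRw : Rw = 0) (hRr : posdef Rr) (hGg : posdef Gg).
Hypotheses (hEc : Ec \in unitmx) (hRl : Rl \in unitmx).
Hypothesis tellegenBD : forall V I : 'rV[R]_(Q + P), V *m B^T = 0 -> I *m D^T = 0 -> V *m I^T = 0.

Lemma kernel_paramsK x : (x <= kermx K^T)%MS ->
  (kernel_params x <= param_space)%MS /\ params_kernel (kernel_params x) = x.
Proof.
rewrite sub_kermx.
case: (row_mx_exists x) => qmc [x1 ->]; case: (row_mx_exists qmc) => qm [qc ->].
case: (row_mx_exists x1) => pwl [x2 ->]; case: (row_mx_exists pwl) => pw [pl ->].
case: (row_mx_exists x2) => vq [x3 ->]; case: (row_mx_exists x3) => iq [x4 ->].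
case: (row_mx_exists x4) => vp [ip ->].
case: (row_mx_exists vq) => vq1 [vq2 ->]; case: (row_mx_exists vq1) => vm [vc ->].
case: (row_mx_exists vq2) => vr [vu ->].
case: (row_mx_exists iq) => iq1 [iq2 ->]; case: (row_mx_exists iq1) => im [ic ->].
case: (row_mx_exists iq2) => ir [iu ->].
case: (row_mx_exists vp) => vp1 [vp2 ->]; case: (row_mx_exists vp1) => vw [vl ->].
case: (row_mx_exists vp2) => vg [vj ->].
case: (row_mx_exists ip) => ip1 [ip2 ->]; case: (row_mx_exists ip1) => iw [il ->].
case: (row_mx_exists ip2) => ig [ij ->].
rewrite linK_kernelE !row_mxKl mul_Fq_tr mul_Fi_tr mul_Gp_tr mul_Gv_tr !add_row_mx.
rewrite !eq_row_mxE !row_mx_eq0 hEm hRw !trmx0 !mulmx0 !addr0 !add0r !eq_row_mxE.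
move=> /andP[/andP[/eqP im0 /eqP ic0] /and5P[/andP[/eqP vw0 /eqP vl0]
  /andP[/andP[/eqP evm /eqP evc] /andP[/eqP evr /eqP evu]]
  /andP[/andP[/eqP eiw /eqP eil] /andP[/eqP eig /eqP eij]] /eqP hB /eqP hD]].
subst im ic vw vl vu ij; rewrite mul0mx in evm eiw; subst vm iw vr ig.
have := tellegenBD hB hD.
rewrite !tr_row_mx !mul_row_col !trmx0 !mulmx0 !mul0mx !addr0 !add0r.
move=> /matrixP/(_ 0 0); rewrite mxE [X in X + _ = _]quad_form_tr trmx_mul trmxK mulmxA [RHS]mxE.
(* Tellegen: the power dissipated in the resistors vanishes. *)
case/(posdef_quad_addr_eq0 hRr hGg) => ir0 vg0; subst ir vg; rewrite !mul0mx in hB hD *.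
have VLsupp := VL_row_supp iu il; have ICsupp := IC_row_supp vc vj.
rewrite /kernel_params /params_kernel /= !(row_mxKl, row_mxKr) !colsel_supp //.
split; last by rewrite !(row_mxKl, row_mxKr) evc eil !mulmxK ?unitmx_tr.
rewrite !submx_row_block_diag !submx1 /= !sub_kermx !trmx_mul !mulmxA !colsel_supp //.
by apply/andP; split; apply/eqP; [exact: hD | exact: hB].
Qed.

Lemma params_kernelK y : (y <= param_space)%MS ->
  (params_kernel y <= kermx K^T)%MS /\ kernel_params (params_kernel y) = y.
Proof.
case: (row_mx_exists y) => qm [y1 ->]; case: (row_mx_exists y1) => pw [y2 ->].
case: (row_mx_exists y2) => c [d ->].
rewrite !submx_row_block_diag !submx1 /= !sub_kermx => /andP[/eqP hc /eqP hd].
have [iu [il eI]] : exists iu il, c *m (colsel R VL)^T =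
    row_mx (row_mx (row_mx 0 0) (row_mx 0 iu)) (row_mx (row_mx 0 il) (row_mx 0 0)).
  by do 2 eexists; apply: VL_suppE => e he; apply: mul_colsel_tr_notin.
have [vc [vj eV]] : exists vc vj, d *m (colsel R IC)^T =
    row_mx (row_mx (row_mx 0 vc) (row_mx 0 0)) (row_mx (row_mx 0 0) (row_mx 0 vj)).
  by do 2 eexists; apply: IC_suppE => e he; apply: mul_colsel_tr_notin.
split; last first.
  rewrite /kernel_params /params_kernel /= !(row_mxKl, row_mxKr, hsubmxK).
  by rewrite -!mulmxA !colselK !mulmx1.
rewrite /params_kernel /= !(row_mxKl, row_mxKr) eI eV !(row_mxKl, row_mxKr).
rewrite linK_kernelE !(row_mxKl, row_mxKr) mul_Fq_tr mul_Fi_tr mul_Gp_tr mul_Gv_tr hEm hRw.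
rewrite !mulmxKV ?unitmx_tr // -eV -eI -!mulmxA -!trmx_mul hc hd !trmx0 !mulmx0 !mul0mx.
by rewrite !add_row_mx !addr0 !add0r !row_mx0 !eqxx.
Qed.

Lemma dimker_linK :
  dimker K = (nm + nw + dimker (subcols VL D) + dimker (subcols IC B))%N.
Proof.
rewrite /dimker !subcolsE -mxrank_param_space.
apply: (mxrank_linear_bij kernel_params_linear params_kernel_linear).
  exact: kernel_paramsK.
exact: params_kernelK.
Qed.

End Linearization.

Theorem theorem3
  (R : realType) (n nm nc nr nu nw nl ng nj rb rd : nat)
  (* the circuit digraph; branches ordered m, c, r, u | w, l, g, j *)
  (src tgt : 'I_(nbr4 nm nc nr nu + nbr4 nw nl ng nj) -> 'I_n)
  (B : 'M[R]_(rb, nbr4 nm nc nr nu + nbr4 nw nl ng nj))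
  (D : 'M[R]_(rd, nbr4 nm nc nr nu + nbr4 nw nl ng nj))
  (hB : reduced_loop_matrix src tgt B)
  (hD : reduced_cutset_matrix src tgt D)
  (* device characteristics *)
  (eta1 : 'rV[R]_nm -> 'rV[R]_nm -> R -> 'rV[R]_nm)
  (eta2 : 'rV[R]_nc -> R -> 'rV[R]_nc)
  (eta3 : 'rV[R]_nr -> R -> 'rV[R]_nr)
  (eta4 : R -> 'rV[R]_nu)
  (zeta1 : 'rV[R]_nw -> 'rV[R]_nw -> R -> 'rV[R]_nw)
  (zeta2 : 'rV[R]_nl -> R -> 'rV[R]_nl)
  (zeta3 : 'rV[R]_ng -> R -> 'rV[R]_ng)
  (zeta4 : R -> 'rV[R]_nj)
  (* memristors: partial derivatives not identically zero *)
  (hm1 : (0 < nm)%N -> exists q i t, jac (fun q' => eta1 q' i t) q != 0)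
  (hm2 : (0 < nm)%N -> exists q i t, jac (fun i' => eta1 q i' t) i != 0)
  (hw1 : (0 < nw)%N -> exists p v t, jac (fun p' => zeta1 p' v t) p != 0)
  (hw2 : (0 < nw)%N -> exists p v t, jac (fun v' => zeta1 p v' t) v != 0)
  (* the equilibrium *)
  (qmc : 'rV[R]_(nm + nc)) (pwl : 'rV[R]_(nw + nl))
  (vq iq : 'rV[R]_(nbr4 nm nc nr nu)) (vp ip : 'rV[R]_(nbr4 nw nl ng nj)) (t0 : R)
  (heq : equilibrium B D eta1 eta2 eta3 eta4 zeta1 zeta2 zeta3 zeta4
                     qmc pwl vq iq vp ip t0) :
  let qm := lsubmx qmc in let qc := rsubmx qmc in
  let pw := lsubmx pwl in let pl := rsubmx pwl in
  let im := lsubmx (lsubmx iq) in let ir := lsubmx (rsubmx iq) in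
  let vw := lsubmx (lsubmx vp) in let vg := lsubmx (rsubmx vp) in
  let Em := jac (fun q => eta1 q im t0) qm in
  let Zm := jac (fun i => eta1 qm i t0) im in
  let Ec := jac (fun q => eta2 q t0) qc in
  let Rr := jac (fun i => eta3 i t0) ir in
  let Rw := jac (fun p => zeta1 p vw t0) pw in
  let Yw := jac (fun v => zeta1 pw v t0) vw in
  let Rl := jac (fun p => zeta2 p t0) pl in
  let Gg := jac (fun v => zeta3 v t0) vg in
  (* differentiability (C^1 regularity) of the device maps at the equilibrium *)
  differentiable (fun q => eta1 q im t0) qm ->
  differentiable (fun i => eta1 qm i t0) im ->
  differentiable (fun q => eta2 q t0) qc ->
  differentiable (fun i => eta3 i t0) ir ->
  differentiable (fun p => zeta1 p vw t0) pw ->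
  differentiable (fun v => zeta1 pw v t0) vw ->
  differentiable (fun p => zeta2 p t0) pl ->
  differentiable (fun v => zeta3 v t0) vg ->
  (* hypotheses of the theorem at the equilibrium *)
  Em = 0 -> Rw = 0 ->
  posdef Rr -> posdef Gg ->
  Ec \in unitmx -> Rl \in unitmx ->
  dimker (linK Em Zm Ec Rr Rw Yw Rl Gg B D)
  = (nm + nw + dimker (subcols (VLset nm nc nr nu nw nl ng nj) D)
             + dimker (subcols (ICset nm nc nr nu nw nl ng nj) B))%N.
Proof.
move=> qm qc pw pl im ir vw vg Em Zm Ec Rr Rw Yw Rl Gg _ _ _ _ _ _ _ _.
move=> hEm hRw hRr hGg hEc hRl.
apply: dimker_linK => // V I; exact: tellegen hB hD.
Qed.
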